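(* Let $(a,b,c)$ be a cyclic triple, assume (AW), that $(A^a,A^b)$ is a Leonard pair as in the context, and that $(A^c,A^a)$ is also a Leonard pair with eigenvalue orderings $\theta^c_0,\dots,\theta^c_{2s}$ and $\theta^a_0,\dots,\theta^a_{2s}$ (for which the other operator acts irreducibly tridiagonally). Let $\{|\theta^a_M\rangle\}$ be the eigenbasis of $A^a$ attached to the pair $(A^a,A^b)$ (described in the context). Then for $0\le M\le 2s$, $$A^c|\theta^a_M\rangle=A^{(c,a)}_{M+1,M}\,\mathfrak f(M)\,|\theta^a_{M+1}\rangle+A^{(c,a)}_{M,M}|\theta^a_M\rangle+A^{(c,a)}_{M-1,M}\,\mathfrak f(M-1)^{-1}|\theta^a_{M-1}\rangle,$$ where $\mathfrak f(k)=\dfrac{\mathsf c^aq^{-2k-2}+r_0q^{-1}\mathsf c^b\mathsf b^c}{\mathsf b^aq^{2k}+r_0q^{-1}\mathsf c^b\mathsf b^c}$ (the last term is absent for $M=0$). Equivalently, with $f_M=f_0\prod_{k=0}^{M-1}\mathfrak f(k)$ for any $f_0\neq0$, the vectors $f_M|\theta^a_M\rangle$ form an eigenbasis of $A^a$ on which $A^c$ acts with the coefficients $A^{(c,a)}$.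
   Context: $q\in\mathbb C^*$ is not a root of unity, $s\in\{0,\tfrac12,1,\dots\}$, $\mathcal V$ a complex vector space of dimension $2s+1$ with identity $\mathbb I$; $[X,Y]_q=qXY-q^{-1}YX$. Labels range over $\{\cdot,*,\diamond\}$; $A^{\cdot}=A$, $\mathsf b^\cdot=\mathsf b$, $\mathsf c^\cdot=\mathsf c$. Fix nonzero $r_0,\mathsf b^a,\mathsf c^a$ with $r_0^{-2}=\mathsf b\mathsf c=\mathsf b^*\mathsf c^*=\mathsf b^\diamond\mathsf c^\diamond$; $\theta^a_M=\mathsf b^aq^{2M}+\mathsf c^aq^{-2M}$; for distinct $a,b,c$, $\omega^{\{a,b,c\}}=-(q-q^{-1})^2(\theta^a_s\theta^b_s-r_0^{-1}(q^{2s+1}+q^{-2s-1})\theta^c_s)$. For $A,A^*\in\mathrm{End}(\mathcal V)$ set $A^\diamond=\frac{r_0}{q^2-q^{-2}}[A^*,A]_q+\frac{r_0\omega^{\{\cdot,*,\diamond\}}}{(q-q^{-1})(q^2-q^{-2})}\mathbb I$. Hypothesis (AW): for every ordered pair $(a,b)$ of distinct labels, $c$ the remaining one, $[A^a,[A^a,A^b]_q]_{q^{-1}}=-\frac{(q^2-q^{-2})^2}{r_0^2}A^b+\omega^{\{a,b,c\}}A^a+\frac{q+q^{-1}}{r_0}\omega^{\{a,c,b\}}\mathbb I$. A Leonard pair on $\mathcal V$ is a pair of diagonalizable operators such that each has an eigenbasis in which the other is represented by an irreducible tridiagonal matrix. A cyclic triple is one of $(\cdot,*,\diamond),( *,\diamond,\cdot),(\diamond,\cdot,*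 )$. Coefficients: for a cyclic triple $(a,b,c)$, $A^{(b,a)}_{M,M-1}=q^{2-4s}\frac{(1-q^{2M})(\mathsf c^a-\mathsf b^aq^{2M+4s})(\mathsf b^b\mathsf b^cr_0q^{4s-1}+\mathsf b^aq^{2M-2})(\mathsf c^a\mathsf c^cr_0q^{-1}+\mathsf c^bq^{2M-2})}{(\mathsf c^a-\mathsf b^aq^{4M-2})(\mathsf c^a-\mathsf b^aq^{4M})}$, $A^{(b,a)}_{M-1,M}=\frac{(1-q^{2M-4s-2})(\mathsf c^a-\mathsf b^aq^{2M-2})(\mathsf c^a+\mathsf b^b\mathsf b^cr_0q^{2M+4s-1})(\mathsf c^b+\mathsf b^a\mathsf c^cr_0q^{2M-1})}{(\mathsf c^a-\mathsf b^aq^{4M-4})(\mathsf c^a-\mathsf b^aq^{4M-2})}$, $A^{(b,a)}_{M,M}=\theta^b_0-A^{(b,a)}_{M,M+1}-A^{(b,a)}_{M,M-1}$; coefficients with indices outside $\{0,\dots,2s\}$ are $0$. $A^{(a,b)}_{M,N}$ is the image of $A^{(b,a)}_{M,N}$ under $\mathsf b^a\leftrightarrow\mathsf b^b$, $\mathsf c^a\leftrightarrow\mathsf c^b$, $\mathsf b^c\mapsto q^{-4s}\mathsf c^c$, $\mathsf c^c\mapsto q^{4s}\mathsf b^c$. This defines $A^{(x,y)}$ for all six ordered pairs of distinct labels (in particular $A^{(c,a)}$ is obtained from the cyclic triple $(c,a,b)$). Bases attached to a Leonard pair: for cyclic $(a,b,c)$ with $(A^a,A^b)$ a Leonard pair (eigenvalue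 orderings $\theta^a_M,\theta^b_M$), there are bases $\{|\theta^a_M\rangle\}$, $\{|\theta^b_M\rangle\}$ with $A^a|\theta^a_M\rangle=\theta^a_M|\theta^a_M\rangle$, $A^b|\theta^a_M\rangle=A^{(b,a)}_{M+1,M}|\theta^a_{M+1}\rangle+A^{(b,a)}_{M,M}|\theta^a_M\rangle+A^{(b,a)}_{M-1,M}|\theta^a_{M-1}\rangle$, $A^b|\theta^b_M\rangle=\theta^b_M|\theta^b_M\rangle$, $A^a|\theta^b_M\rangle=A^{(a,b)}_{M+1,M}|\theta^b_{M+1}\rangle+A^{(a,b)}_{M,M}|\theta^b_M\rangle+A^{(a,b)}_{M-1,M}|\theta^b_{M-1}\rangle$; these are the bases ''attached to the pair $(A^a,A^b)$''. *)

(* The complex numbers are modelled as  R[i]  (real_closed's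
   complex) over an arbitrary  R : realType  (any realType is isomorphic to the
   reals, so R[i] is the field of complex numbers). *)
From HB Require Import structures.
From mathcomp Require Import all_boot all_order all_algebra.
From mathcomp Require Import complex.
From mathcomp Require Import reals.

Set Implicit Arguments.
Unset Strict Implicit.
Unset Printing Implicit Defensive.

Import Order.TTheory GRing.Theory Num.Theory.
Local Open Scope ring_scope.

Inductive label := Ldot | Lstar | Ldiam.

Definition third (x y : label) : label :=
  match x, y with
  | Ldot, Lstar | Lstar, Ldot => Ldiam
  | Ldot, Ldiam | Ldiam, Ldot => Lstar
  | _, _ => Ldot
  end.

Definition cyclic3 (a b c : label) : Prop :=
  (a, b, c) = (Ldot, Lstar, Ldiam) \/ (a, b, c) = (Lstar, Ldiam, Ldot) \/
  (a, b, c) = (Ldiam, Ldot, Lstar).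

Section Defs.
Variable C : fieldType.

Definition not_root_of_unity (q : C) : Prop := forall k : nat, (0 < k)%N -> q ^+ k != 1.

Definition qcomm (q : C) (n : nat) (X Y : 'M[C]_n) : 'M[C]_n :=
  q *: (X *m Y) - q^-1 *: (Y *m X).

(* Throughout, N stands for 2s (so dim V = N+1), q, r0 are the parameters and
   bv l, cv l stand for b^l, c^l. *)
Variables (q r0 : C) (N : nat) (bv cv : label -> C).

(* b q^k + c q^{-k};  theta^l_M = thetaE l (2M),  theta^l_s = thetaE l N *)
Definition thetaE (l : label) (k : int) : C := bv l * q ^ k + cv l * q ^ (- k).
Definition theta (l : label) (M : int) : C := thetaE l (2 * M).

Definition omega (x y z : label) : C :=
  - (q - q^-1) ^+ 2 *
    (thetaE x N%:Z * thetaE y N%:Z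
     - r0^-1 * (q ^ (N%:Z + 1) + q ^ (- (N%:Z + 1))) * thetaE z N%:Z).

Definition Aop (A As : 'M[C]_N.+1) (l : label) : 'M[C]_N.+1 :=
  match l with
  | Ldot => A
  | Lstar => As
  | Ldiam => (r0 / (q ^+ 2 - q ^- 2)) *: qcomm q As A
             + (r0 * omega Ldot Lstar Ldiam / ((q - q^-1) * (q ^+ 2 - q ^- 2)))%:M
  end.

Definition AW (A As : 'M[C]_N.+1) : Prop :=
  forall x y : label, x <> y ->
    let z := third x y in
    qcomm q^-1 (Aop A As x) (qcomm q (Aop A As x) (Aop A As y)) =
      (- (q ^+ 2 - q ^- 2) ^+ 2 / r0 ^+ 2) *: Aop A As y
      + omega x y z *: Aop A As x
      + ((q + q^-1) / r0 * omega x z y)%:M.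

(* The coefficient family A^{(b,a)} for a cyclic triple (a,b,c), written as a
   function of the six parameters b^a,c^a,b^b,c^b,b^c,c^c (4s = 2N).
   Indices are integers; entries with an index outside {0..N} are 0. *)
Section Coef.
Variables (ba ca bb cb bc cc : C).

Definition coef_low (M : int) : C :=
  q ^ (2 - 2 * N%:Z) * (1 - q ^ (2 * M)) * (ca - ba * q ^ (2 * M + 2 * N%:Z))
  * (bb * bc * r0 * q ^ (2 * N%:Z - 1) + ba * q ^ (2 * M - 2))
  * (ca * cc * r0 * q^-1 + cb * q ^ (2 * M - 2))
  / ((ca - ba * q ^ (4 * M - 2)) * (ca - ba * q ^ (4 * M))).

Definition coef_up (M : int) : C :=
  (1 - q ^ (2 * M - 2 * N%:Z - 2)) * (ca - ba * q ^ (2 * M - 2))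
  * (ca + bb * bc * r0 * q ^ (2 * M + 2 * N%:Z - 1))
  * (cb + ba * cc * r0 * q ^ (2 * M - 1))
  / ((ca - ba * q ^ (4 * M - 4)) * (ca - ba * q ^ (4 * M - 2))).

Definition in_range (i : int) : bool := (0 <= i) && (i <= N%:Z).

Definition coef_diag (M : int) : C :=
  (bb + cb) - (if in_range (M + 1) then coef_up (M + 1) else 0)
            - (if in_range (M - 1) then coef_low M else 0).

Definition coefT (i j : int) : C :=
  if in_range i && in_range j then
    if i == j + 1 then coef_low i
    else if j == i + 1 then coef_up j
    else if i == j then coef_diag i
    else 0
  else 0.
End Coef.

(* For a cyclic triple (a,b,c):  A^{(b,a)} = Aba a b c,  A^{(a,b)} = Aab a b c.
   In particular A^{(c,a)} = Aab c a b (cyclic triple (c,a,b)). *)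
Definition Aba (a b c : label) : int -> int -> C :=
  coefT (bv a) (cv a) (bv b) (cv b) (bv c) (cv c).
Definition Aab (a b c : label) : int -> int -> C :=
  coefT (bv b) (cv b) (bv a) (cv a) (q ^ (- (2 * N%:Z)) * cv c) (q ^ (2 * N%:Z) * bv c).

End Defs.

Section Lin.
Variables (C : fieldType) (n : nat).

Definition colmx (v : nat -> 'cV[C]_n) : 'M[C]_n := \matrix_(i < n, j < n) v j i 0.

Definition is_basis (v : nat -> 'cV[C]_n) : Prop := colmx v \in unitmx.

Definition mx_in_basis (B : 'M[C]_n) (v : nat -> 'cV[C]_n) : 'M[C]_n :=
  invmx (colmx v) *m B *m colmx v.

Definition irred_tridiag (T : 'M[C]_n) : Prop :=
  (forall i j : 'I_n, (i.+1 < j)%N \/ (j.+1 < i)%N -> T i j = 0) /\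
  (forall i j : 'I_n, (i.+1 == j)%N || (j.+1 == i)%N -> T i j != 0).

Definition eigen_seq (B : 'M[C]_n) (v : nat -> 'cV[C]_n) (th : nat -> C) : Prop :=
  forall M : nat, (M < n)%N -> B *m v M = th M *: v M.

Definition leonard_pair_ord (B1 B2 : 'M[C]_n) (th1 th2 : nat -> C) : Prop :=
  (exists v, is_basis v /\ eigen_seq B1 v th1 /\ irred_tridiag (mx_in_basis B2 v)) /\
  (exists w, is_basis w /\ eigen_seq B2 w th2 /\ irred_tridiag (mx_in_basis B1 w)).

(* B v_M = T(M+1,M) v_{M+1} + T(M,M) v_M + T(M-1,M) v_{M-1}  for M = 0..n-1
   (T vanishes at out-of-range indices, so v (n) and v (0.-1) are irrelevant) *)
Definition acts_tridiag (B : 'M[C]_n) (v : nat -> 'cV[C]_n) (T : int -> int -> C) : Prop :=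
  forall M : nat, (M < n)%N ->
    B *m v M = T (M.+1)%:Z M%:Z *: v M.+1 + T M%:Z M%:Z *: v M
               + T (M%:Z - 1) M%:Z *: v M.-1.
End Lin.

Section Attached.
Variables (C : fieldType) (q r0 : C) (N : nat) (bv cv : label -> C).

Definition attached_bases (A As : 'M[C]_N.+1) (a b c : label)
    (v w : nat -> 'cV[C]_N.+1) : Prop :=
  is_basis v /\ is_basis w /\
  eigen_seq (Aop q r0 bv cv A As a) v (fun M => theta q bv cv a M%:Z) /\
  acts_tridiag (Aop q r0 bv cv A As b) v (Aba q r0 N bv cv a b c) /\
  eigen_seq (Aop q r0 bv cv A As b) w (fun M => theta q bv cv b M%:Z) /\
  acts_tridiag (Aop q r0 bv cv A As a) w (Aab q r0 N bv cv a b c).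

Definition gauge (a b c : label) (k : int) : C :=
  (cv a * q ^ (- 2 * k - 2) + r0 * q^-1 * cv b * bv c)
  / (bv a * q ^ (2 * k) + r0 * q^-1 * cv b * bv c).
End Attached.

(* For a cyclic triple (a, b, c), (AW) yields
     A^c = r0 / (q^2 - q^-2) [A^b, A^a]_q + (const) I,
   which for (., *, <>) is the definition of A^<> and for the two other cyclic
   triples follows from (AW) after substituting that definition. Applied to |theta^a_M>, on
   which A^b acts tridiagonally with coefficients A^(b,a), this shows that A^c
   acts tridiagonally on the same basis, with off-diagonal coefficients
   r0 / (q^2 - q^-2) (q theta^a_M - q^-1 theta^a_M') A^(b,a)_{M',M}.
   Rational identities, using b^l c^l = r0^-2, identify these with the entries
   of A^(c,a) rescaled by the gauge factor f, and similarly on the diagonal.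
   The identities need the off-diagonal entries of A^(b,a) to be nonzero: the
   eigenvalues theta^a_M being simple, the attached basis differs from the
   eigenbasis of the Leonard pair (A^a, A^b) by a diagonal matrix, so A^b is
   irreducible tridiagonal in it too. *)

From HB Require Import structures.
From mathcomp Require Import all_boot all_order all_algebra.
From mathcomp Require Import ring zify.
From mathcomp Require Import complex.
From mathcomp Require Import reals.

Set Implicit Arguments.
Unset Strict Implicit.
Unset Printing Implicit Defensive.

Import Order.TTheory GRing.Theory Num.Theory.
Local Open Scope ring_scope.

Lemma PoszS (m : nat) : Posz m.+1 = m%:Z + 1.
Proof. by rewrite -addn1 PoszD. Qed.

Definition lincomb3 (R : pzRingType) (V : lmodType R) (W : V * V * V) (a1 a2 a3 : R) : V :=
  a1 *: W.1.1 + a2 *: W.1.2 + a3 *: W.2.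

Section LinComb3.
Variables (R : pzRingType) (V : lmodType R) (W : V * V * V).

Lemma lincomb3D a1 a2 a3 b1 b2 b3 :
  lincomb3 W a1 a2 a3 + lincomb3 W b1 b2 b3 = lincomb3 W (a1 + b1) (a2 + b2) (a3 + b3).
Proof. by rewrite /lincomb3 !scalerDl addrACA -!addrA (addrCA (b1 *: _)) !addrA. Qed.

Lemma lincomb3N a1 a2 a3 : - lincomb3 W a1 a2 a3 = lincomb3 W (- a1) (- a2) (- a3).
Proof. by rewrite /lincomb3 !opprD !scaleNr. Qed.

Lemma lincomb3Z k a1 a2 a3 : k *: lincomb3 W a1 a2 a3 = lincomb3 W (k * a1) (k * a2) (k * a3).
Proof. by rewrite /lincomb3 !scalerDr !scalerA. Qed.

Lemma lincomb3_eq a1 a2 a3 b1 b2 b3 :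
  a1 = b1 -> a2 = b2 -> a3 = b3 -> lincomb3 W a1 a2 a3 = lincomb3 W b1 b2 b3.
Proof. by move=> -> -> ->. Qed.

Lemma lincomb3_1 : W.1.1 = lincomb3 W 1 0 0.
Proof. by rewrite /lincomb3 scale1r !scale0r !addr0. Qed.

Lemma lincomb3_2 : W.1.2 = lincomb3 W 0 1 0.
Proof. by rewrite /lincomb3 scale1r !scale0r add0r addr0. Qed.

Lemma lincomb3_3 : W.2 = lincomb3 W 0 0 1.
Proof. by rewrite /lincomb3 scale1r !scale0r !add0r. Qed.
End LinComb3.

(* Reduces an equation between linear combinations of x, y, z to the three
   equations between their coefficients. *)
Ltac lincomb3_congr x y z :=
  let W := fresh "W" in
  set W := (x, y, z);
  rewrite [x](lincomb3_1 W) [y](lincomb3_2 W) [z](lincomb3_3 W);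
  rewrite ?(lincomb3Z, lincomb3N, lincomb3D); apply: lincomb3_eq.

Ltac field_nonzero := field; repeat (apply/andP; split); rewrite ?oner_neq0.

Section QCommutator.
Variables (C : fieldType) (n : nat) (q : C).
Implicit Types X Y : 'M[C]_n.

Lemma qcomm_qcommKl X Y : q != 0 ->
  qcomm q X (qcomm q Y X) = - qcomm q^-1 X (qcomm q X Y).
Proof.
move=> q_neq0; rewrite /qcomm !mulmxBr !mulmxBl -!scalemxAr -!scalemxAl !mulmxA ?scalerA ?invrK.
by lincomb3_congr (X *m Y *m X) (X *m X *m Y) (Y *m X *m X); field.
Qed.

Lemma qcomm_qcommKr X Y : q != 0 ->
  qcomm q (qcomm q X Y) X = - qcomm q^-1 X (qcomm q X Y).
Proof.
move=> q_neq0; rewrite /qcomm !mulmxBr !mulmxBl -!scalemxAr -!scalemxAl !mulmxA ?scalerA ?invrK.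
by lincomb3_congr (X *m Y *m X) (X *m X *m Y) (Y *m X *m X); field.
Qed.
End QCommutator.

Section QCommutatorAffine.
Variables (C : fieldType) (n : nat) (q k c : C).
Implicit Types X Y : 'M[C]_n.+1.

Lemma qcomm_affinel X Y :
  qcomm q (k *: Y + c%:M) X = k *: qcomm q Y X + (c * (q - q^-1)) *: X.
Proof.
rewrite /qcomm mulmxDl mulmxDr mul_scalar_mx mul_mx_scalar -scalemxAl -scalemxAr.
by lincomb3_congr (Y *m X) (X *m Y) X; ring.
Qed.

Lemma qcomm_affiner X Y :
  qcomm q X (k *: Y + c%:M) = k *: qcomm q X Y + (c * (q - q^-1)) *: X.
Proof.
rewrite /qcomm mulmxDl mulmxDr mul_scalar_mx mul_mx_scalar -scalemxAl -scalemxAr.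
by lincomb3_congr (Y *m X) (X *m Y) X; ring.
Qed.
End QCommutatorAffine.

Lemma omegaC (C : fieldType) (q r0 : C) N (bv cv : label -> C) x y z :
  omega q r0 N bv cv x y z = omega q r0 N bv cv y x z.
Proof. by rewrite /omega; congr (_ * (_ - _)); exact: mulrC. Qed.

Lemma Aop_cyclic (C : fieldType) (q r0 : C) N (bv cv : label -> C) (A As : 'M[C]_N.+1) a b c :
  q != 0 -> r0 != 0 -> q ^+ 2 != 1 -> q ^+ 4 != 1 ->
  AW q r0 bv cv A As -> cyclic3 a b c ->
  Aop q r0 bv cv A As c =
    (r0 / (q ^+ 2 - q ^- 2)) *: qcomm q (Aop q r0 bv cv A As b) (Aop q r0 bv cv A As a)
    + (r0 * omega q r0 N bv cv a b c / ((q - q^-1) * (q ^+ 2 - q ^- 2)))%:M.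
Proof.
move=> q_neq0 r0_neq0 q2_neq1 q4_neq1 hAW.
have q4_neq1' : (q * q) ^+ 2 - 1 != 0 by rewrite -expr2 -exprM subr_eq0.
have q2_neq1' : q * q - 1 != 0 by rewrite -expr2 subr_eq0.
case=> [[-> -> ->] | [[-> -> ->] | [-> -> ->]]] //=.
- have neq : Lstar <> Ldot by [].
  move: (hAW _ _ neq) => /= AW_star_dot.
  rewrite qcomm_affinel qcomm_qcommKr // AW_star_dot [omega _ _ _ _ _ Lstar Ldot _]omegaC.
  rewrite -![(_ * _)%:M]scalemx1.
  by lincomb3_congr As A (1%:M : 'M[C]_N.+1); field_nonzero.
- have neq : Ldot <> Lstar by [].
  move: (hAW _ _ neq) => /= AW_dot_star.
  rewrite qcomm_affiner qcomm_qcommKl // AW_dot_star [omega _ _ _ _ _ Ldiam Ldot _]omegaC.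
  rewrite -![(_ * _)%:M]scalemx1.
  by lincomb3_congr As A (1%:M : 'M[C]_N.+1); field_nonzero.
Qed.

Section Bases.
Variables (C : fieldType) (n : nat).
Implicit Types (v : nat -> 'cV[C]_n) (B : 'M[C]_n).

Lemma colmx_delta v (k : 'I_n) : colmx v *m delta_mx k 0 = v k.
Proof.
apply/matrixP => r z; rewrite !mxE (bigD1 k) //= big1 => [|l hl].
  by rewrite !mxE !eqxx (ord1 z) /= mulr1 addr0.
by rewrite !mxE (negbTE hl) mulr0.
Qed.

Lemma invmx_colmx v (k : 'I_n) : is_basis v -> invmx (colmx v) *m v k = delta_mx k 0.
Proof. by move=> hv; rewrite -colmx_delta mulmxA mulVmx // mul1mx. Qed.

Lemma mulmx_colmxE (X : 'M[C]_n) v i j : (X *m colmx v) i j = (X *m v j) i 0.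
Proof. by rewrite !mxE; apply: eq_bigr => k _; rewrite mxE. Qed.

Lemma eigen_seq_colmx B v th :
  eigen_seq B v th -> B *m colmx v = colmx v *m diag_mx (\row_j th (nat_of_ord j)).
Proof.
move=> B_eig; apply/matrixP => r j.
by rewrite mulmx_colmxE (B_eig _ (ltn_ord j)) mul_mx_diag !mxE mulrC.
Qed.

Lemma eigen_seq_basis_change_diag B v v' th :
  is_basis v -> eigen_seq B v th -> eigen_seq B v' th ->
  (forall k l : 'I_n, k != l -> th k != th l) ->
  forall k l : 'I_n, k != l -> (invmx (colmx v) *m colmx v') k l = 0.
Proof.
move=> hv v_eig v'_eig th_neq k l kl; set P := invmx (colmx v) *m colmx v'.
pose D : 'M[C]_n := diag_mx (\row_j th (nat_of_ord j)).
have DP : D *m P = P *m D.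
  have DE : D = invmx (colmx v) *m B *m colmx v.
    by rewrite -mulmxA (eigen_seq_colmx v_eig) mulmxA mulVmx // mul1mx.
  rewrite -mulmxA -(eigen_seq_colmx v'_eig) {1}DE -!mulmxA (mulmxA (colmx v)).
  by rewrite mulmxV // mul1mx.
move/matrixP: DP => /(_ k l); rewrite /D mul_mx_diag mul_diag_mx !mxE => DPkl.
apply/eqP; apply: contraNT (th_neq k l kl) => Pkl; apply/eqP; apply: (mulIf Pkl).
by rewrite DPkl mulrC.
Qed.

Lemma mulmx_diag_sidesE (Q T P : 'M[C]_n) i j :
  (forall k l, k != l -> Q k l = 0) -> (forall k l, k != l -> P k l = 0) ->
  (Q *m T *m P) i j = Q i i * T i j * P j j.
Proof.
move=> Q_diag P_diag.
rewrite !mxE (bigD1 j) //= big1 => [|k hk]; last by rewrite P_diag ?mulr0.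
rewrite addr0 !mxE (bigD1 i) //= big1 => [|k hk]; last by rewrite Q_diag 1?eq_sym ?mul0r.
by rewrite addr0.
Qed.
End Bases.

Section IrreducibleTridiagonal.
Variables (C : fieldType) (n : nat).
Implicit Types (v w : nat -> 'cV[C]_n.+1) (B : 'M[C]_n.+1).

(* The eigenvector equation determines all coordinates from the first one,
   since every subdiagonal entry is nonzero. *)
Lemma irred_tridiag_eigvec_eq0 (T : 'M[C]_n.+1) (y : 'cV[C]_n.+1) (lam : C) :
  irred_tridiag T -> T *m y = lam *: y -> y ord0 0 = 0 -> y = 0.
Proof.
move=> [T_out T_neq0] Ty y0.
suff y_le : forall k (l : 'I_n.+1), (l <= k)%N -> y l 0 = 0.
  by apply/matrixP => r z; rewrite (ord1 z) mxE (y_le n) // -ltnS.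
elim=> [|k IH] l lek.
  by have -> : l = ord0 by apply/val_inj; rewrite /=; lia.
case: (leqP l k) => [|ltkl]; first exact: IH.
have l_eq : (l : nat) = k.+1 by lia.
have ltkn : (k < n.+1)%N by have := ltn_ord l; lia.
move/matrixP: Ty => /(_ (Ordinal ltkn) 0); rewrite !mxE (IH (Ordinal ltkn) (leqnn k)) mulr0.
rewrite (bigD1 l) //= big1 => [|m ml].
  rewrite addr0 => /eqP; rewrite mulf_eq0 => /orP[|/eqP //].
  by rewrite (negbTE (T_neq0 _ l _)) //= l_eq eqxx.
case: (leqP m k) => [lemk|ltkm]; first by rewrite (IH m lemk) mulr0.
rewrite T_out ?mul0r //; left => /=.
have : (m : nat) != l by apply: contraNneq ml => e; apply/eqP/val_inj.
by rewrite l_eq; lia.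
Qed.

Lemma eigen_seq_irred_tridiag_neq B v w th :
  is_basis v -> is_basis w -> eigen_seq B v th -> irred_tridiag (mx_in_basis B w) ->
  forall i j : 'I_n.+1, i != j -> th i != th j.
Proof.
move=> hv hw B_eig T_irr i j ij; apply/eqP => th_eq.
set U := invmx (colmx w) *m colmx v.
have U_unit : U \in unitmx by rewrite unitmx_mul unitmx_inv hw hv.
have U_inj : forall x : 'cV[C]_n.+1, U *m x = 0 -> x = 0.
  by move=> x Ux; rewrite -(mulKmx U_unit x) Ux mulmx0.
have coordE : forall k : 'I_n.+1, invmx (colmx w) *m v k = U *m delta_mx k 0.
  by move=> k; rewrite -mulmxA colmx_delta.
have coord_eig : forall k : 'I_n.+1,
    mx_in_basis B w *m (invmx (colmx w) *m v k) = th k *: (invmx (colmx w) *m v k).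
  move=> k; rewrite /mx_in_basis -!mulmxA (mulmxA (colmx w)) mulmxV // mul1mx.
  by rewrite (B_eig _ (ltn_ord k)) -scalemxAr.
have := coordE i; have := coordE j; have := coord_eig i; have := coord_eig j.
rewrite -th_eq; move: (invmx (colmx w) *m v i) (invmx (colmx w) *m v j).
move=> Y Z Z_eig Y_eig ZE YE.
set y0 := Y ord0 0; set z0 := Z ord0 0.
have comb0 : z0 *: Y - y0 *: Z = 0.
  apply: (irred_tridiag_eigvec_eq0 T_irr (lam := th i)).
    by rewrite mulmxBr -!scalemxAr Y_eig Z_eig !scalerA mulrC [y0 * _]mulrC scalerBr !scalerA.
  by rewrite !mxE -/y0 -/z0 mulrC subrr.
have delta0 : z0 *: delta_mx i 0 - y0 *: delta_mx j 0 = 0 :> 'cV[C]_n.+1.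
  by apply: U_inj; rewrite mulmxBr -!scalemxAr -YE -ZE.
have z00 : z0 = 0.
  by move/matrixP: delta0 => /(_ i 0); rewrite !mxE !eqxx (negbTE ij) /= mulr1 mulr0 subr0.
have y00 : y0 = 0.
  move/matrixP: delta0 => /(_ j 0); rewrite !mxE !eqxx eq_sym (negbTE ij) /= mulr1 mulr0 sub0r.
  by move/eqP; rewrite oppr_eq0 => /eqP.
have Y0 : Y = 0 := irred_tridiag_eigvec_eq0 T_irr Y_eig y00.
have : delta_mx i 0 = 0 :> 'cV[C]_n.+1 by apply: U_inj; rewrite -YE.
by move/matrixP => /(_ i 0); rewrite !mxE !eqxx /=; move/eqP; rewrite oner_eq0.
Qed.

Lemma mx_in_basis_subdiag B v (T : int -> int -> C) (i j : 'I_n.+1) :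
  is_basis v -> acts_tridiag B v T -> (i : nat) = j.+1 -> mx_in_basis B v i j = T i j.
Proof.
move=> hv B_act ij.
rewrite /mx_in_basis mulmx_colmxE -mulmxA (B_act _ (ltn_ord j)) !mulmxDr -!scalemxAr.
have ltj1 : (j.+1 < n.+1)%N by rewrite -ij.
have ltjm : (j.-1 < n.+1)%N by have := ltn_ord j; lia.
rewrite (invmx_colmx (Ordinal ltj1) hv) (invmx_colmx j hv) (invmx_colmx (Ordinal ltjm) hv).
rewrite !mxE /= -!val_eqE /= ij !eqxx /= gtn_eqF //.
have -> : (j.+1 == j.-1) = false by apply/negbTE; lia.
by rewrite /= !mulr0 !addr0 mulr1.
Qed.

Lemma mx_in_basis_superdiag B v (T : int -> int -> C) (i j : 'I_n.+1) :
  is_basis v -> acts_tridiag B v T -> T n.+1 n = 0 -> (j : nat) = i.+1 ->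
  mx_in_basis B v i j = T i j.
Proof.
move=> hv B_act T_top ji.
rewrite /mx_in_basis mulmx_colmxE -mulmxA (B_act _ (ltn_ord j)) !mulmxDr -!scalemxAr.
have ltjm : (j.-1 < n.+1)%N by have := ltn_ord j; lia.
rewrite (invmx_colmx j hv) (invmx_colmx (Ordinal ltjm) hv).
have -> : (j : nat)%:Z - 1 = i by rewrite ji PoszS addrK.
have top_term : (T j.+1 j *: (invmx (colmx v) *m v j.+1)) i 0 = 0.
  case: (ltnP j.+1 n.+1) => [ltj1 | gej1].
    by rewrite (invmx_colmx (Ordinal ltj1) hv) !mxE /= -!val_eqE /= ji ltn_eqF // mulr0.
  have -> : (j : nat) = n by have := ltn_ord j; lia.
  by rewrite T_top scale0r mxE.
rewrite mxE [in X in X + _]mxE top_term add0r !mxE /= -!val_eqE /= ji.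
by rewrite ltn_eqF // mulr0 add0r -pred_Sn eqxx mulr1.
Qed.

Lemma leonard_acts_tridiag_neq0 (B1 B2 : 'M[C]_n.+1) v th1 th2 (T : int -> int -> C) :
  leonard_pair_ord B1 B2 th1 th2 -> is_basis v -> eigen_seq B1 v th1 ->
  acts_tridiag B2 v T -> T n.+1 n = 0 ->
  forall j, (j < n)%N -> T j.+1 j != 0 /\ T j j.+1 != 0.
Proof.
move=> [[v' [hv' [v'_eig T'_irr]]] [w' [hw' [_ T1_irr]]]] hv v_eig B2_act T_top j ltjn.
have th_neq := eigen_seq_irred_tridiag_neq hv hw' v_eig T1_irr.
have P_diag := eigen_seq_basis_change_diag hv v_eig v'_eig th_neq.
have Q_diag := eigen_seq_basis_change_diag hv' v'_eig v_eig th_neq.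
have B2E : mx_in_basis B2 v' = (invmx (colmx v') *m colmx v) *m mx_in_basis B2 v
                                *m (invmx (colmx v) *m colmx v').
  by rewrite /mx_in_basis !mulmxA mulmxK // mulmxK.
have ltj1 : (j.+1 < n.+1)%N by lia.
have ltj0 : (j < n.+1)%N by lia.
have [_ T'_neq0] := T'_irr.
split.
- have := T'_neq0 (Ordinal ltj1) (Ordinal ltj0); rewrite /= eqxx orbT => /(_ isT).
  rewrite B2E mulmx_diag_sidesE //.
  rewrite (mx_in_basis_subdiag (i := Ordinal ltj1) (j := Ordinal ltj0) hv B2_act erefl).
  by rewrite !mulf_eq0 !negb_or => /andP[/andP[_ ->]].
- have := T'_neq0 (Ordinal ltj0) (Ordinal ltj1); rewrite /= eqxx => /(_ isT).
  rewrite B2E mulmx_diag_sidesE //.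
  rewrite (mx_in_basis_superdiag (i := Ordinal ltj0) (j := Ordinal ltj1) hv B2_act T_top erefl).
  by rewrite !mulf_eq0 !negb_or => /andP[/andP[_ ->]].
Qed.
End IrreducibleTridiagonal.

(* v N.+1 is arbitrary and v 0.-1 = v 0, hence the two boundary hypotheses. *)
Lemma qcomm_acts_tridiag (C : fieldType) N (A B : 'M[C]_N.+1) (v : nat -> 'cV[C]_N.+1)
    (th : int -> C) (T : int -> int -> C) (q k c0 : C) :
  eigen_seq A v (fun M => th M%:Z) -> acts_tridiag B v T ->
  T N.+1 N = 0 -> T (-1) 0 = 0 ->
  forall M, (M <= N)%N ->
  (k *: qcomm q B A + c0%:M) *m v M =
      (k * (q * th M - q^-1 * th M.+1) * T M.+1 M) *: v M.+1
    + (k * (q - q^-1) * th M * T M M + c0) *: v M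
    + (k * (q * th M - q^-1 * th (M%:Z - 1)) * T (M%:Z - 1) M) *: v M.-1.
Proof.
move=> A_eig B_act T_top T_bot M leMN.
have A_up : A *m (T M.+1 M *: v M.+1) = (T M.+1 M * th M.+1) *: v M.+1.
  case: (ltnP M N) => [ltMN | geMN]; first by rewrite -scalemxAr (A_eig M.+1 ltMN) scalerA.
  have -> : M = N by apply/eqP; rewrite eqn_leq leMN geMN.
  by rewrite T_top scale0r mulmx0 mul0r scale0r.
have A_down : A *m (T (M%:Z - 1) M *: v M.-1) = (T (M%:Z - 1) M * th (M%:Z - 1)) *: v M.-1.
  case: M leMN {A_up} => [|M] leMN.
    by have -> : T (0%:Z - 1) 0 = 0 := T_bot; rewrite scale0r mulmx0 mul0r scale0r.
  rewrite -scalemxAr (A_eig M (ltnW leMN)) scalerA.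
  by have -> : (M.+1)%:Z - 1 = M%:Z by rewrite PoszS addrK.
rewrite mulmxDl mul_scalar_mx -scalemxAl /qcomm mulmxBl -!scalemxAl -!mulmxA.
rewrite (A_eig M leMN) -scalemxAr (B_act M leMN) !mulmxDr A_up A_down -scalemxAr (A_eig M leMN).
by lincomb3_congr (v M.+1) (v M) (v M.-1); ring.
Qed.

Section CoefficientTable.
Variables (C : fieldType) (q r0 : C) (N : nat) (ba ca bb cb bc cc : C).
Local Notation coefT := (coefT q r0 N ba ca bb cb bc cc).
Local Notation coef_low := (coef_low q r0 N ba ca bb cb bc cc).
Local Notation coef_up := (coef_up q r0 N ba ca bb cb bc cc).

Lemma in_range_nat (m : nat) : in_range N m = (m <= N)%N.
Proof. by rewrite /in_range lez_nat le0z_nat. Qed.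

Lemma coefT_subdiag (M : nat) : (M < N)%N -> coefT M.+1 M = coef_low M.+1.
Proof. by move=> ltMN; rewrite /coefT !in_range_nat ltMN ltnW //= PoszS eqxx. Qed.

Lemma coefT_superdiag (M : nat) : (M < N)%N -> coefT M M.+1 = coef_up M.+1.
Proof.
move=> ltMN; rewrite /coefT !in_range_nat ltMN ltnW //= PoszS.
have -> : (M%:Z == M%:Z + 1 + 1) = false by apply/negbTE; lia.
by rewrite eqxx.
Qed.

Lemma coefT_diag (M : nat) : (M <= N)%N -> coefT M M = coef_diag q r0 N ba ca bb cb bc cc M.
Proof.
move=> leMN; rewrite /coefT !in_range_nat leMN /=.
have -> : (M%:Z == M%:Z + 1) = false by apply/negbTE; lia.
by rewrite eqxx.
Qed.

Lemma coefT_above : coefT N.+1 N = 0.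
Proof. by rewrite /coefT in_range_nat ltnn. Qed.

Lemma coefT_below : coefT (-1) 0 = 0.
Proof. by []. Qed.

Lemma coef_diagE (M : nat) : (M <= N)%N ->
  coef_diag q r0 N ba ca bb cb bc cc M =
  (bb + cb) - (if (M < N)%N then coef_up (M%:Z + 1) else 0)
            - (if (0 < M)%N then coef_low M else 0).
Proof.
move=> leMN; rewrite /coef_diag -PoszS in_range_nat PoszS; congr (_ - _ - _).
by case: M leMN => [|M] leMN //; rewrite PoszS addrK in_range_nat ltnW.
Qed.

Lemma coef_low_neq0 M : coef_low M != 0 ->
  [/\ 1 - q ^ (2 * M) != 0, ca - ba * q ^ (2 * M + 2 * N%:Z) != 0,
      bb * bc * r0 * q ^ (2 * N%:Z - 1) + ba * q ^ (2 * M - 2) != 0 &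
      [/\ ca * cc * r0 * q^-1 + cb * q ^ (2 * M - 2) != 0,
          ca - ba * q ^ (4 * M - 2) != 0 & ca - ba * q ^ (4 * M) != 0]].
Proof.
rewrite /coef_low => h; split; try split; apply: contraNneq h => ->;
  by rewrite ?(mulr0, mul0r, invr0, mulrA).
Qed.

Lemma coef_up_neq0 M : coef_up M != 0 ->
  [/\ 1 - q ^ (2 * M - 2 * N%:Z - 2) != 0, ca - ba * q ^ (2 * M - 2) != 0,
      ca + bb * bc * r0 * q ^ (2 * M + 2 * N%:Z - 1) != 0 &
      [/\ cb + ba * cc * r0 * q ^ (2 * M - 1) != 0,
          ca - ba * q ^ (4 * M - 4) != 0 & ca - ba * q ^ (4 * M - 2) != 0]].
Proof.
rewrite /coef_up => h; split; try split; apply: contraNneq h => ->;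
  by rewrite ?(mulr0, mul0r, invr0, mulrA).
Qed.
End CoefficientTable.

Lemma expfz_mul_nat (C : fieldType) (x : C) (c : int) (n : nat) : x ^ (c * n%:Z) = (x ^+ n) ^ c.
Proof. by rewrite mulrC -exprz_exp. Qed.

Lemma expfz_nat (C : fieldType) (x : C) (n : nat) : x ^ (n%:Z) = x ^+ n.
Proof. by []. Qed.

Lemma expfV_mul (C : fieldType) (x : C) (n m : nat) : x ^- (n * m) = ((x ^+ n) ^+ m)^-1.
Proof. by rewrite exprM. Qed.

(* Turns every integer power of q into a rational expression in q, q ^+ M and q ^+ N. *)
Ltac qpow_normalize :=
  rewrite ?PoszS ?(@mulrDr int, @mulrBr int, @mulNr int, @mulrN int, @opprD int,
                   @opprK int, @mulr1 int);
  rewrite ?expfzDr //;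
  rewrite -?invr_expz ?expfz_mul_nat -?invr_expz ?expfz_nat ?expfV_mul ?(addSn, add0n).

Lemma neq0_of_mul (C : fieldType) (e u d : C) : e * u = d -> d != 0 -> e != 0.
Proof. by move=> <-; apply: contraNneq => ->; rewrite mul0r. Qed.

Ltac neq0_from h u := apply: (neq0_of_mul (u := u) _ h); field_nonzero.

Section CoefficientIdentities.
Variables (C : fieldType) (q r0 : C) (N : nat) (bv cv : label -> C) (a b c : label).
Hypotheses (q_neq0 : q != 0) (r0_neq0 : r0 != 0).
Hypotheses (q2_neq1 : q ^+ 2 != 1) (q4_neq1 : q ^+ 4 != 1).
Hypothesis bv_neq0 : forall l, bv l != 0.
Hypothesis cvE : forall l, cv l = (r0 ^+ 2 * bv l)^-1.

Local Notation th M := (theta q bv cv a M).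
Local Notation kappa := (r0 / (q ^+ 2 - q ^- 2)).
Local Notation c0 := (r0 * omega q r0 N bv cv a b c / ((q - q^-1) * (q ^+ 2 - q ^- 2))).
Local Notation low_ba := (coef_low q r0 N (bv a) (cv a) (bv b) (cv b) (bv c) (cv c)).
Local Notation up_ba := (coef_up q r0 N (bv a) (cv a) (bv b) (cv b) (bv c) (cv c)).
Local Notation low_ca := (coef_low q r0 N (bv a) (cv a) (bv c) (cv c)
                           (q ^ (- (2 * N%:Z)) * cv b) (q ^ (2 * N%:Z) * bv b)).
Local Notation up_ca := (coef_up q r0 N (bv a) (cv a) (bv c) (cv c)
                          (q ^ (- (2 * N%:Z)) * cv b) (q ^ (2 * N%:Z) * bv b)).

Let bva_neq0 := bv_neq0 a.
Let bvb_neq0 := bv_neq0 b.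
Let bvc_neq0 := bv_neq0 c.
Let q4_neq1' : (q * q) ^+ 2 - 1 != 0.
Proof. by rewrite -expr2 -exprM subr_eq0. Qed.
Let q2_neq1' : q * q - 1 != 0.
Proof. by rewrite -expr2 subr_eq0. Qed.

Lemma coef_low_gauge (M : nat) : low_ba M.+1 != 0 -> up_ba M.+1 != 0 ->
  kappa * (q * th M - q^-1 * th M.+1) * low_ba M.+1 = low_ca M.+1 * gauge q r0 bv cv a b c M.
Proof.
move=> /coef_low_neq0[_ _ _ [_ low_den1 low_den2]] /coef_up_neq0[_ _ _ [up_fac4 _ _]].
move: low_den1 low_den2 up_fac4; rewrite /coef_low /theta /thetaE /gauge !cvE; qpow_normalize.
set x := q ^+ M; set y := q ^+ N; move=> low_den1 low_den2 up_fac4.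
have x_neq0 : x != 0 by rewrite expf_neq0.
have y_neq0 : y != 0 by rewrite expf_neq0.
have den1 : bv a * x ^+ 2 * (q * (r0 * bv b)) + bv c != 0.
  by neq0_from up_fac4 (r0 ^+ 2 * bv b * bv c)^-1.
have den2 : 1 + - (bv a * (x ^+ 4 * (q * (q * (q * q))))) * (r0 ^+ 2 * bv a) != 0.
  by neq0_from low_den2 (r0 ^+ 2 * bv a)^-1.
have den3 : 1 + - (bv a * (x ^+ 4 * (q * q))) * (r0 ^+ 2 * bv a) != 0.
  by neq0_from low_den1 (r0 ^+ 2 * bv a)^-1.
by field_nonzero.
Qed.

Lemma coef_up_gauge (M : nat) : low_ba M.+1 != 0 -> up_ba M.+1 != 0 ->
  kappa * (q * th M.+1 - q^-1 * th M) * up_ba M.+1 = up_ca M.+1 / gauge q r0 bv cv a b c M.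
Proof.
move=> /coef_low_neq0[_ _ _ [low_fac4 _ _]] /coef_up_neq0[_ _ _ [up_fac4 up_den1 up_den2]].
move: low_fac4 up_fac4 up_den1 up_den2; rewrite /coef_up /theta /thetaE /gauge !cvE; qpow_normalize.
set x := q ^+ M; set y := q ^+ N; move=> low_fac4 up_fac4 up_den1 up_den2.
have x_neq0 : x != 0 by rewrite expf_neq0.
have y_neq0 : y != 0 by rewrite expf_neq0.
have den1 : bv a * x ^+ 2 * (q * (r0 * bv b)) + bv c != 0.
  by neq0_from up_fac4 (r0 ^+ 2 * bv b * bv c)^-1.
have den4 : bv b + bv c * (r0 * bv a * (x ^+ 2 * q)) != 0.
  by neq0_from low_fac4 (r0 ^+ 3 * bv a * bv b * bv c * q)^-1.
have den5 : 1 + - (bv a * (x ^+ 4 * (q * q))) * (r0 ^+ 2 * bv a) != 0.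
  by neq0_from up_den2 (r0 ^+ 2 * bv a)^-1.
have den6 : 1 + - (bv a * x ^+ 4) * (r0 ^+ 2 * bv a) != 0 by neq0_from up_den1 (r0 ^+ 2 * bv a)^-1.
by field_nonzero.
Qed.

Lemma coef_diag_interior (M : nat) : low_ba M != 0 -> up_ba (M%:Z + 1) != 0 ->
  kappa * (q - q^-1) * th M * (bv b + cv b - up_ba (M%:Z + 1) - low_ba M) + c0
  = bv c + cv c - up_ca (M%:Z + 1) - low_ca M.
Proof.
move=> /coef_low_neq0[_ _ _ [_ low_den1 low_den2]] /coef_up_neq0[_ _ _ [_ _ up_den2]].
move: low_den1 low_den2 up_den2.
rewrite /coef_low /coef_up /omega /theta /thetaE !cvE; qpow_normalize.
set x := q ^+ M; set y := q ^+ N; move=> low_den1 low_den2 up_den2.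
have x_neq0 : x != 0 by rewrite expf_neq0.
have y_neq0 : y != 0 by rewrite expf_neq0.
have den1 : 1 + - (bv a * x ^+ 4) * (r0 ^+ 2 * bv a) != 0 by neq0_from low_den2 (r0 ^+ 2 * bv a)^-1.
have den2 : q * q + - (bv a * x ^+ 4) * (r0 ^+ 2 * bv a) != 0.
  by neq0_from low_den1 (r0 ^+ 2 * bv a * q ^+ 2)^-1.
have den3 : 1 + - (bv a * (x ^+ 4 * (q * q))) * (r0 ^+ 2 * bv a) != 0.
  by neq0_from up_den2 (r0 ^+ 2 * bv a)^-1.
by field_nonzero.
Qed.

Lemma coef_diag_bottom : up_ba (0%:Z + 1) != 0 ->
  kappa * (q - q^-1) * th 0 * (bv b + cv b - up_ba (0%:Z + 1)) + c0
  = bv c + cv c - up_ca (0%:Z + 1).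
Proof.
move=> /coef_up_neq0[_ _ _ [_ up_den1 up_den2]].
move: up_den1 up_den2; rewrite /coef_up /omega /theta /thetaE !cvE; qpow_normalize.
set y := q ^+ N; move=> up_den1 up_den2.
have y_neq0 : y != 0 by rewrite expf_neq0.
have den1 : 1 + - (bv a * (q * q)) * (r0 ^+ 2 * bv a) != 0 by neq0_from up_den2 (r0 ^+ 2 * bv a)^-1.
have den2 : 1 + - bv a * (r0 ^+ 2 * bv a) != 0 by neq0_from up_den1 (r0 ^+ 2 * bv a)^-1.
by field_nonzero.
Qed.

Lemma coef_diag_top : low_ba N != 0 ->
  kappa * (q - q^-1) * th N * (bv b + cv b - low_ba N) + c0 = bv c + cv c - low_ca N.
Proof.
move=> /coef_low_neq0[_ _ _ [_ low_den1 low_den2]].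
move: low_den1 low_den2; rewrite /coef_low /omega /theta /thetaE !cvE; qpow_normalize.
set y := q ^+ N; move=> low_den1 low_den2.
have y_neq0 : y != 0 by rewrite expf_neq0.
have den1 : 1 + - (bv a * y ^+ 4) * (r0 ^+ 2 * bv a) != 0 by neq0_from low_den2 (r0 ^+ 2 * bv a)^-1.
have den2 : q * q + - (bv a * y ^+ 4) * (r0 ^+ 2 * bv a) != 0.
  by neq0_from low_den1 (r0 ^+ 2 * bv a * q ^+ 2)^-1.
by field_nonzero.
Qed.

Lemma coef_diag_single : N = 0%N -> kappa * (q - q^-1) * th 0 * (bv b + cv b) + c0 = bv c + cv c.
Proof.
move=> N0; rewrite N0 /omega /theta /thetaE !cvE; qpow_normalize.
by field_nonzero.
Qed.

Hypothesis Aba_offdiag_neq0 : forall j, (j < N)%N ->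
  Aba q r0 N bv cv a b c j.+1 j != 0 /\ Aba q r0 N bv cv a b c j j.+1 != 0.

Let low_ba_neq0 j : (j < N)%N -> low_ba j.+1 != 0.
Proof. by move=> ltjN; have [+ _] := Aba_offdiag_neq0 ltjN; rewrite /Aba coefT_subdiag. Qed.

Let up_ba_neq0 j : (j < N)%N -> up_ba j.+1 != 0.
Proof. by move=> ltjN; have [_ +] := Aba_offdiag_neq0 ltjN; rewrite /Aba coefT_superdiag. Qed.

Lemma Aab_subdiag_gauge (M : nat) : (M <= N)%N ->
  kappa * (q * th M - q^-1 * th M.+1) * Aba q r0 N bv cv a b c M.+1 M
  = Aab q r0 N bv cv c a b M.+1 M * gauge q r0 bv cv a b c M.
Proof.
move=> leMN; case: (ltnP M N) => [ltMN | geMN].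
  by rewrite /Aba /Aab !coefT_subdiag // coef_low_gauge // ?low_ba_neq0 ?up_ba_neq0.
have -> : M = N by apply/eqP; rewrite eqn_leq leMN geMN.
by rewrite /Aba /Aab !coefT_above !mulr0 mul0r.
Qed.

Lemma Aab_superdiag_gauge (M : nat) : (M <= N)%N ->
  kappa * (q * th M - q^-1 * th (M%:Z - 1)) * Aba q r0 N bv cv a b c (M%:Z - 1) M
  = Aab q r0 N bv cv c a b (M%:Z - 1) M / gauge q r0 bv cv a b c (M%:Z - 1).
Proof.
case: M => [|M] leMN; first by rewrite /Aba /Aab !coefT_below mulr0 mul0r.
have -> : (M.+1)%:Z - 1 = M%:Z by rewrite PoszS addrK.
by rewrite /Aba /Aab !coefT_superdiag // coef_up_gauge // ?low_ba_neq0 ?up_ba_neq0.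
Qed.

Lemma Aab_diag (M : nat) : (M <= N)%N ->
  kappa * (q - q^-1) * th M * Aba q r0 N bv cv a b c M M + c0 = Aab q r0 N bv cv c a b M M.
Proof.
move=> leMN; rewrite /Aba /Aab !coefT_diag // !coef_diagE //.
case: (ltnP M N) => ltMN; case: M leMN ltMN => [|M] leMN ltMN /=; rewrite ?ltMN ?subr0.
- by apply: coef_diag_bottom; rewrite -PoszS up_ba_neq0.
- by apply: coef_diag_interior; rewrite ?low_ba_neq0 ?(ltnW ltMN) // -PoszS up_ba_neq0.
- by apply: coef_diag_single; apply/eqP; rewrite -leqn0.
- have MN : (M.+1)%:Z = N by congr Posz; apply/eqP; rewrite eqn_leq leMN ltMN.
  by rewrite MN; apply: coef_diag_top; rewrite -MN low_ba_neq0.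
Qed.
End CoefficientIdentities.

Theorem lemma3p3 (R : realType) (N : nat) (q r0 : R[i]) (bv cv : label -> R[i])
    (A As : 'M[R[i]]_N.+1) (a b c : label) (v w : nat -> 'cV[R[i]]_N.+1) :
  q != 0 -> not_root_of_unity q ->
  r0 != 0 -> (forall l, bv l != 0) -> (forall l, cv l != 0) ->
  r0 ^- 2 = bv Ldot * cv Ldot ->
  r0 ^- 2 = bv Lstar * cv Lstar ->
  r0 ^- 2 = bv Ldiam * cv Ldiam ->
  AW q r0 bv cv A As ->
  cyclic3 a b c ->
  leonard_pair_ord (Aop q r0 bv cv A As a) (Aop q r0 bv cv A As b)
    (fun M => theta q bv cv a M%:Z) (fun M => theta q bv cv b M%:Z) ->
  leonard_pair_ord (Aop q r0 bv cv A As c) (Aop q r0 bv cv A As a)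
    (fun M => theta q bv cv c M%:Z) (fun M => theta q bv cv a M%:Z) ->
  attached_bases q r0 bv cv A As a b c v w ->
  forall M : nat, (M <= N)%N ->
    Aop q r0 bv cv A As c *m v M =
        (Aab q r0 N bv cv c a b (M.+1)%:Z M%:Z * gauge q r0 bv cv a b c M%:Z) *: v M.+1
      + Aab q r0 N bv cv c a b M%:Z M%:Z *: v M
      + (Aab q r0 N bv cv c a b (M%:Z - 1) M%:Z / gauge q r0 bv cv a b c (M%:Z - 1))
          *: v M.-1.
Proof.
move=> q_neq0 q_not_root r0_neq0 bv_neq0 _ r0_dot r0_star r0_diam hAW abc LP_ab _.
move=> [v_basis [_ [v_eig [b_act _]]]] M leMN.
have q2_neq1 : q ^+ 2 != 1 by exact: q_not_root.
have q4_neq1 : q ^+ 4 != 1 by exact: q_not_root.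
have cvE : forall l, cv l = (r0 ^+ 2 * bv l)^-1.
  move=> l; have bcl : r0 ^- 2 = bv l * cv l by case: l.
  by rewrite invfM bcl mulrC mulrA mulVf // mul1r.
have T_top : Aba q r0 N bv cv a b c N.+1 N = 0 by exact: coefT_above.
have Aba_offdiag_neq0 := leonard_acts_tridiag_neq0 LP_ab v_basis v_eig b_act T_top.
rewrite (Aop_cyclic _ _ _ _ hAW abc) //.
rewrite (qcomm_acts_tridiag _ _ _ v_eig b_act T_top (coefT_below _ _ _ _ _ _ _ _ _)) //.
by rewrite Aab_subdiag_gauge // Aab_diag // Aab_superdiag_gauge.
Qed.
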